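(* Let $f_1,\dots,f_n\colon\mathbb R\to\mathbb R$ and $\eta\colon\mathbb R\times\mathbb R\to(0,\infty)$ be smooth with $\eta(x,0)=1$, and consider the metric $(\star)$ on $\mathbb R^{n+2}$, with scalar curvature $\mathrm{Scal}(x,u)=-2\eta_{uu}/\eta$. Let $k_\gamma(x)=-\eta_u(x,0)$. If $\mathrm{Scal}<0$ everywhere and there is $\varepsilon>0$ such that $|k_\gamma(x)|\le(1-\varepsilon)\sqrt{\tfrac12|\mathrm{Scal}(x,u)|}$ for all $x,u$, then the metric is complete.
   Context: The metric $(\star)$: on $\mathbb R\times\mathbb R^{n+1}$ with coordinates $(x,u,v_1,\dots,v_n)$, conventions $v_0=u$, $v_{-1}=v_{n+1}=0$, $f_0=f_{n+1}=0$, $g_{\eta,f}=\eta(x,u)^2dx^2+\sum_{j=0}^n\big(dv_j+(v_{j-1}f_j(x)-v_{j+1}f_{j+1}(x))dx\big)^2$. $k_\gamma$ is the geodesic curvature of $\gamma(x)=(x,0,\dots,0)$. *)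

From Stdlib Require Import Reals Lra.
From Coquelicot Require Import Coquelicot.
Open Scope R_scope.

Definition smooth1 (f : R -> R) : Prop :=
  forall (k : nat) (x : R), ex_derive_n f k x.

Definition pdx (g : R -> R -> R) : R -> R -> R :=
  fun x u => Derive (fun s => g s u) x.
Definition pdu (g : R -> R -> R) : R -> R -> R :=
  fun x u => Derive (fun s => g x s) u.

Fixpoint C2 (k : nat) (g : R -> R -> R) : Prop :=
  (forall x u, continuity_2d_pt g x u) /\
  match k with
  | O => True
  | S k' => (forall x u, ex_derive (fun s => g s u) x /\ ex_derive (fun s => g x s) u)
            /\ C2 k' (pdx g) /\ C2 k' (pdu g)
  end.

Definition smooth2 (g : R -> R -> R) : Prop := forall k, C2 k g.

(* A point of R^{n+2} is p : nat -> R with p 0 = x, p (S j) = v_j (j = 0..n),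
   v_0 = u; coordinates of index > n+1 are ignored. *)

(* f_j with the conventions f_0 = f_{n+1} = 0 *)
Definition fconv (n : nat) (f : nat -> R -> R) (j : nat) (x : R) : R :=
  if andb (Nat.leb 1 j) (Nat.leb j n) then f j x else 0.

(* v_j with the conventions v_{-1} = v_{n+1} = 0; vprev j = v_{j-1}, vnext j = v_{j+1} *)
Definition vprev (p : nat -> R) (j : nat) : R :=
  match j with O => 0 | S j' => p j end.           (* v_{j-1} = p (S (j-1)) = p j *)
Definition vnext (n : nat) (p : nat -> R) (j : nat) : R :=
  if Nat.leb (S j) n then p (S (S j)) else 0.        (* v_{j+1} = p (j+2) *)

Definition gform (n : nat) (eta : R -> R -> R) (f : nat -> R -> R)
    (p w : nat -> R) : R :=
  (eta (p O) (p 1%nat)) ^ 2 * (w O) ^ 2 +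
  sum_f_R0 (fun j => (w (S j) +
      (vprev p j * fconv n f j (p O) - vnext n p j * fconv n f (S j) (p O)) * w O) ^ 2) n.

Definition C1_curve (n : nat) (c : R -> nat -> R) : Prop :=
  forall i, (i <= S n)%nat ->
    (forall t, ex_derive (fun s => c s i) t) /\
    (forall t, continuous (Derive (fun s => c s i)) t).

Definition velocity (c : R -> nat -> R) (t : R) : nat -> R :=
  fun i => Derive (fun s => c s i) t.

Definition glength (n : nat) (eta : R -> R -> R) (f : nat -> R -> R)
    (c : R -> nat -> R) : R :=
  RInt (fun t => sqrt (gform n eta f (c t) (velocity c t))) 0 1.

Definition joins (n : nat) (c : R -> nat -> R) (p q : nat -> R) : Prop :=
  forall i, (i <= S n)%nat -> c 0 i = p i /\ c 1 i = q i.

(* Riemannian distance d(p,q) < eps, unfolded: some C^1 curve from p to q has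
   length < eps. *)
Definition dist_lt (n : nat) (eta : R -> R -> R) (f : nat -> R -> R)
    (p q : nat -> R) (eps : R) : Prop :=
  exists c, C1_curve n c /\ joins n c p q /\ glength n eta f c < eps.

Definition metric_complete (n : nat) (eta : R -> R -> R) (f : nat -> R -> R) : Prop :=
  forall s : nat -> (nat -> R),
    (forall eps, 0 < eps -> exists N, forall m k, (N <= m)%nat -> (N <= k)%nat ->
        dist_lt n eta f (s m) (s k) eps) ->
    exists q, forall eps, 0 < eps -> exists N, forall k, (N <= k)%nat ->
        dist_lt n eta f (s k) q eps.

Definition Scal (eta : R -> R -> R) (x u : R) : R :=
  -2 * pdu (pdu eta) x u / eta x u.
Definition kgamma (eta : R -> R -> R) (x : R) : R := - pdu eta x 0.

(* Proof.  (1) For fixed x, h = eta(x, .) satisfies h'' >= a^2 h with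
   a = |k_gamma(x)| / (1 - e), h(0) = 1 and |h'(0)| <= (1 - e) a, by the
   pinching hypothesis; comparing h with exponentials gives h >= e/2, so eta is
   bounded below by a constant m > 0 (eta_lower_bound).
   (2) Pointwise, |w|_g controls m |w_x|, every frame component
   a_j = w_{v_j} + b_j w_x, and, because sum_j v_j b_j telescopes to 0, the
   radial derivative <v, w_v> / Phi(v) of Phi(v) = sqrt (1 + |v|^2).
   (3) Integrating along a C^1 curve, x moves by at most L/m and Phi by at most
   L, L the length; so curves of length < 1 stay in a bounded region, where
   |b_j| is bounded and every coordinate moves by at most K L.
   (4) Hence a d-Cauchy sequence is coordinatewise Cauchy, with coordinatewise
   limit q, and straight segments from nearby points to q have length
   O(|p - q|), so the sequence d-converges to q. *)
From Stdlib Require Import Reals Lra Lia Psatz.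
From Coquelicot Require Import Coquelicot.
Open Scope R_scope.

Lemma sum_term_le (F : nat -> R) N i :
  (forall j, 0 <= F j) -> (i <= N)%nat -> F i <= sum_f_R0 F N.
Proof.
intros Hpos Hi. induction N as [|N IH].
- replace i with 0%nat by lia. simpl; lra.
- rewrite tech5. destruct (Nat.eq_dec i (S N)) as [->|Hne].
  + pose proof (cond_pos_sum F N Hpos). lra.
  + pose proof (IH ltac:(lia)). pose proof (Hpos (S N)). lra.
Qed.

Lemma sum_telescope (T : nat -> R) N :
  sum_f_R0 (fun j => T j - T (S j)) N = T 0%nat - T (S N).
Proof. induction N as [|N IH]; [simpl; ring|]. rewrite tech5, IH. ring. Qed.

(* Cauchy-Schwarz for finite sums, via the nonnegative quadratic
   l |-> sum (l a_j - b_j)^2. *)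
Lemma cauchy_schwarz (a b : nat -> R) N :
  (sum_f_R0 (fun j => a j * b j) N) ^ 2 <=
  sum_f_R0 (fun j => a j ^ 2) N * sum_f_R0 (fun j => b j ^ 2) N.
Proof.
set (A := sum_f_R0 (fun j => a j ^ 2) N).
set (B := sum_f_R0 (fun j => a j * b j) N).
set (C := sum_f_R0 (fun j => b j ^ 2) N).
assert (Hquad : forall l, 0 <= l ^ 2 * A - 2 * l * B + C).
{ intros l.
  assert (E : sum_f_R0 (fun j => (l * a j - b j) ^ 2) N = l ^ 2 * A - 2 * l * B + C).
  { unfold A, B, C. induction N as [|N IH]; [simpl; ring|]. rewrite !tech5, IH. ring. }
  rewrite <- E. apply cond_pos_sum. intros; apply pow2_ge_0. }
assert (HA : 0 <= A) by (apply cond_pos_sum; intros; apply pow2_ge_0).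
destruct (Rle_lt_or_eq_dec 0 A HA) as [HA0|HA0].
- specialize (Hquad (B / A)).
  replace ((B / A) ^ 2 * A - 2 * (B / A) * B + C) with (C - B ^ 2 / A) in Hquad by (field; lra).
  apply Rmult_le_compat_r with (r := A) in Hquad; [|lra].
  replace ((C - B ^ 2 / A) * A) with (C * A - B ^ 2) in Hquad by (field; lra). lra.
- rewrite <- HA0 in Hquad |- *.
  destruct (Req_dec B 0) as [HB|HB]; [rewrite HB; lra|].
  specialize (Hquad ((C + 1) / (2 * B))).
  replace (((C + 1) / (2 * B)) ^ 2 * 0 - 2 * ((C + 1) / (2 * B)) * B + C) with (-1)
    in Hquad by (field; auto).
  lra.
Qed.

Lemma abs_le_sqrt (x y : R) : 0 <= y -> x ^ 2 <= y -> Rabs x <= sqrt y.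
Proof.
intros Hy H. rewrite <- sqrt_Rsqr_abs. apply sqrt_le_1_alt. rewrite <- Rsqr_pow2 in H. exact H.
Qed.

Lemma sq_le (x y : R) : Rabs x <= y -> x ^ 2 <= y ^ 2.
Proof. intros H. pose proof (Rabs_pos x). rewrite <- (pow2_abs x). apply pow_incr. lra. Qed.

Lemma nondecreasing_from_zero (F dF : R -> R) :
  (forall x, 0 <= x -> is_derive F x (dF x)) ->
  (forall x, 0 <= x -> 0 <= dF x) -> forall u, 0 <= u -> F 0 <= F u.
Proof.
intros HD Hpos u Hu.
destruct (Req_dec u 0) as [->|Hu0]; [lra|].
destruct (MVT_gen F 0 u dF) as [c [Hc Hmvt]].
- intros x Hx. apply HD. unfold Rmin in Hx; destruct Rle_dec; lra.
- intros x Hx. apply derivable_continuous_pt. exists (dF x).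
  apply is_derive_Reals, HD. unfold Rmin in Hx; destruct Rle_dec; lra.
- assert (Hc0 : 0 <= c) by (unfold Rmin in Hc; destruct Rle_dec; lra).
  specialize (Hpos c Hc0). nra.
Qed.

Section Comparison.
Variables (h h1 h2 : R -> R) (a e : R).
Hypothesis Ha : 0 <= a.
Hypothesis He : 0 < e <= 1/2.
Hypothesis Dh : forall u, is_derive h u (h1 u).
Hypothesis Dh1 : forall u, is_derive h1 u (h2 u).
Hypothesis Hconvex : forall u, a ^ 2 * h u <= h2 u.
Hypothesis Hh0 : h 0 = 1.
Hypothesis Hslope0 : - h1 0 <= (1 - e) * a.

(* exp(-a u) (h' + a h) is nondecreasing, so it stays above its value at 0. *)
Lemma comparison_slope u : 0 <= u -> e * a <= exp (- a * u) * (h1 u + a * h u).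
Proof.
intros Hu.
pose proof (nondecreasing_from_zero (fun u => exp (- a * u) * (h1 u + a * h u))
   (fun u => exp (- a * u) * (h2 u - a ^ 2 * h u))) as Hmono.
simpl in Hmono. rewrite Rmult_0_r, exp_0, Hh0 in Hmono.
apply Rle_trans with (1 * (h1 0 + a * 1)); [lra|]. apply Hmono; auto.
- intros x _. auto_derive.
  + repeat split; (exists (h1 x); apply Dh) || (exists (h2 x); apply Dh1).
  + replace (Derive (fun y => h1 y) x) with (h2 x) by (symmetry; apply is_derive_unique, Dh1).
    replace (Derive (fun y => h y) x) with (h1 x) by (symmetry; apply is_derive_unique, Dh). ring.
- intros x _. apply Rmult_le_pos; [apply Rlt_le, exp_pos|]. specialize (Hconvex x). lra.
Qed.

(* Integrating once more: e^{au} h(u) - (e/2) e^{2au} is nondecreasing,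
   which forces h(u) >= e/2. *)
Lemma comparison_lower_bound u : 0 <= u -> e / 2 <= h u.
Proof.
intros Hu.
assert (Hexp2 : forall x, exp (2 * a * x) = exp (a * x) * exp (a * x))
  by (intros x; rewrite <- exp_plus; f_equal; ring).
assert (Hmono : 1 - e / 2 <= exp (a * u) * h u - e / 2 * exp (2 * a * u)).
{ pose proof (nondecreasing_from_zero (fun u => exp (a * u) * h u - e / 2 * exp (2 * a * u))
     (fun u => exp (a * u) * (h1 u + a * h u) - e * a * exp (2 * a * u))) as Hmono.
  simpl in Hmono. rewrite !Rmult_0_r, exp_0, Hh0 in Hmono.
  replace (1 - e / 2) with (1 * 1 - e / 2 * 1) by ring. apply Hmono; auto.
  - intros x _. auto_derive.
    + repeat split. exists (h1 x); apply Dh.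
    + replace (Derive (fun y => h y) x) with (h1 x) by (symmetry; apply is_derive_unique, Dh). field.
  - intros x Hx. pose proof (comparison_slope x Hx) as Hs.
    pose proof (exp_pos (a * x)) as Hpos.
    assert (Hinv : exp (a * x) * exp (- a * x) = 1)
      by (rewrite <- exp_plus; replace (a * x + - a * x) with 0 by ring; apply exp_0).
    rewrite Hexp2.
    replace (h1 x + a * h x) with (exp (a * x) * (exp (- a * x) * (h1 x + a * h x)))
      by (rewrite <- Rmult_assoc, Hinv; ring).
    set (E := exp (a * x)) in *. set (Z := exp (- a * x) * (h1 x + a * h x)) in *.
    assert (0 <= E * (Z - e * a)) by (apply Rmult_le_pos; lra). nra. }
assert (HE1 : 1 <= exp (a * u)) by (pose proof (exp_ineq1_le (a * u)); nra).
rewrite Hexp2 in Hmono. set (E := exp (a * u)) in *.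
assert (Hh : 0 < h u - e / 2 * E).
{ destruct (Rlt_or_le 0 (h u - e / 2 * E)) as [|Hneg]; auto. nra. }
nra.
Qed.

End Comparison.

(* Both-sided version: if |h'(0)| <= (1 - e) a then h >= e/2 on all of R,
   by applying the comparison to h and to u |-> h(-u). *)
Lemma comparison_lower_bound_R (h h1 h2 : R -> R) (a e : R) :
  0 <= a -> 0 < e <= 1/2 ->
  (forall u, is_derive h u (h1 u)) -> (forall u, is_derive h1 u (h2 u)) ->
  (forall u, a ^ 2 * h u <= h2 u) -> h 0 = 1 -> Rabs (h1 0) <= (1 - e) * a ->
  forall u, e / 2 <= h u.
Proof.
intros Ha He Dh Dh1 Hconvex Hh0 Hslope u.
assert (Dflip : forall (g dg : R -> R), (forall u, is_derive g u (dg u)) ->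
          forall v, is_derive (fun s => g (- s)) v (- dg (- v))).
{ intros g dg Dg v.
  replace (- dg (- v)) with (scal (-1) (dg (- v)))
    by (unfold scal; simpl; unfold mult; simpl; ring).
  apply (is_derive_comp g (fun s => - s)); [apply Dg|].
  auto_derive; auto; ring. }
destruct (Rle_or_lt 0 u) as [Hu|Hu].
- apply (comparison_lower_bound h h1 h2 a e); auto.
  pose proof (Rle_abs (- h1 0)). rewrite Rabs_Ropp in *. lra.
- replace u with (- (- u)) by ring.
  apply (comparison_lower_bound (fun s => h (- s)) (fun s => - h1 (- s))
           (fun s => h2 (- s)) a e); auto; try lra.
  + intros v. replace (h2 (- v)) with (- - h2 (- v)) by ring.
    apply (is_derive_opp (fun s => h1 (- s))), (Dflip h1 h2 Dh1 v).
  + simpl. rewrite Ropp_0. exact Hh0.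
  + rewrite Ropp_0, Ropp_involutive. pose proof (Rle_abs (h1 0)). lra.
Qed.

Lemma half_abs_Scal (eta : R -> R -> R) x u :
  0 < eta x u -> Scal eta x u < 0 ->
  / 2 * Rabs (Scal eta x u) = pdu (pdu eta) x u / eta x u.
Proof.
intros Hpos Hneg. rewrite Rabs_left by exact Hneg. unfold Scal. field. lra.
Qed.

Lemma pinching_convexity (eta q a e : R) :
  0 < eta -> 0 <= q -> e < 1 -> 0 <= a ->
  (1 - e) * a <= (1 - e) * sqrt (q / eta) -> a ^ 2 * eta <= q.
Proof.
intros Heta Hq He Ha Hle.
assert (Hqe : 0 <= q / eta) by (apply Rmult_le_pos; [lra|apply Rlt_le, Rinv_0_lt_compat; lra]).
assert (Hsq : a <= sqrt (q / eta)) by (apply Rmult_le_reg_l with (1 - e); lra).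
assert (Ha2 : a ^ 2 <= q / eta).
{ rewrite <- (sqrt_sqrt (q / eta)) by lra. simpl. rewrite Rmult_1_r.
  apply Rmult_le_compat; lra. }
apply Rmult_le_compat_r with (r := eta) in Ha2; [|lra].
replace (q / eta * eta) with q in Ha2 by (field; lra). exact Ha2.
Qed.

(* For fixed x, h = eta(x, .) satisfies h'' >= a^2 h with
   a = |k_gamma(x)| / (1 - e), and the comparison lemma gives h >= e/2. *)
Lemma eta_lower_bound (eta : R -> R -> R) :
  smooth2 eta -> (forall x u, 0 < eta x u) -> (forall x, eta x 0 = 1) ->
  (forall x u, Scal eta x u < 0) ->
  (exists eps, 0 < eps /\ forall x u,
      Rabs (kgamma eta x) <= (1 - eps) * sqrt (/ 2 * Rabs (Scal eta x u))) ->
  exists m, 0 < m /\ forall x u, m <= eta x u.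
Proof.
intros Hs Hpos H0 HS [eps [Heps Hk]].
set (e := Rmin eps (1/2)).
assert (He : 0 < e <= 1/2) by (unfold e, Rmin; destruct Rle_dec; lra).
assert (Hee : e <= eps) by (unfold e, Rmin; destruct Rle_dec; lra).
exists (e / 2). split; [lra|]. intros x.
destruct (Hs 2%nat) as [_ [D1 [_ [_ [D2 _]]]]].
set (a := Rabs (kgamma eta x) / (1 - e)).
assert (Ha : 0 <= a)
  by (apply Rmult_le_pos; [apply Rabs_pos|apply Rlt_le, Rinv_0_lt_compat; lra]).
assert (Hka : Rabs (kgamma eta x) = (1 - e) * a) by (unfold a; field; lra).
apply (comparison_lower_bound_R (fun s => eta x s) (pdu eta x) (pdu (pdu eta) x) a e);
  auto.
- intros u. apply Derive_correct, (proj2 (D1 x u)).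
- intros u. apply Derive_correct, (proj2 (D2 x u)).
- intros u.
  assert (Hq : 0 < pdu (pdu eta) x u).
  { specialize (HS x u). unfold Scal in HS.
    pose proof (Rinv_0_lt_compat _ (Hpos x u)). unfold Rdiv in HS. nra. }
  apply pinching_convexity with e; auto; try lra.
  rewrite <- Hka, <- half_abs_Scal by auto.
  eapply Rle_trans; [apply Hk|]. apply Rmult_le_compat_r; [apply sqrt_pos|lra].
- rewrite <- Rabs_Ropp. exact (Req_le _ _ Hka).
Qed.

(* The coefficient b_j = v_{j-1} f_j(x) - v_{j+1} f_{j+1}(x) of dx in the j-th
   square of the metric, and the corresponding orthonormal-frame component
   a_j = w_{v_j} + b_j w_x of a tangent vector w. *)
Definition shear (n : nat) (f : nat -> R -> R) (p : nat -> R) (j : nat) : R :=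
  vprev p j * fconv n f j (p O) - vnext n p j * fconv n f (S j) (p O).
Definition frame (n : nat) (f : nat -> R -> R) (p w : nat -> R) (j : nat) : R :=
  w (S j) + shear n f p j * w O.

Lemma gform_frame n eta f p w :
  gform n eta f p w =
  (eta (p O) (p 1%nat)) ^ 2 * (w O) ^ 2 + sum_f_R0 (fun j => frame n f p w j ^ 2) n.
Proof. reflexivity. Qed.

Lemma sumsq_nonneg (a : nat -> R) N : 0 <= sum_f_R0 (fun j => a j ^ 2) N.
Proof. apply cond_pos_sum. intros; apply pow2_ge_0. Qed.

Lemma gform_nonneg n eta f p w : 0 <= gform n eta f p w.
Proof.
rewrite gform_frame. pose proof (sumsq_nonneg (frame n f p w) n).
pose proof (pow2_ge_0 (eta (p O) (p 1%nat))). pose proof (pow2_ge_0 (w O)). nra.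
Qed.

Lemma gnorm_horizontal n eta f p w m : 0 < m -> m <= eta (p O) (p 1%nat) ->
  m * Rabs (w O) <= sqrt (gform n eta f p w).
Proof.
intros Hm He. rewrite <- (Rabs_pos_eq m) by lra. rewrite <- Rabs_mult.
apply abs_le_sqrt; [apply gform_nonneg|]. rewrite gform_frame.
pose proof (sumsq_nonneg (frame n f p w) n).
assert (m ^ 2 <= eta (p O) (p 1%nat) ^ 2) by (simpl; nra).
pose proof (pow2_ge_0 (w O)). rewrite Rpow_mult_distr. nra.
Qed.

Lemma gnorm_frame n eta f p w j : (j <= n)%nat ->
  Rabs (frame n f p w j) <= sqrt (gform n eta f p w).
Proof.
intros Hj. apply abs_le_sqrt; [apply gform_nonneg|]. rewrite gform_frame.
pose proof (sum_term_le (fun j => frame n f p w j ^ 2) n j ltac:(intros; apply pow2_ge_0) Hj).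
pose proof (pow2_ge_0 (eta (p O) (p 1%nat))). pose proof (pow2_ge_0 (w O)). nra.
Qed.

Lemma fconv_last n f x : fconv n f (S n) x = 0.
Proof.
unfold fconv. replace (Nat.leb (S n) n) with false by (symmetry; apply Nat.leb_gt; lia).
rewrite Bool.andb_false_r. reflexivity.
Qed.

(* The key cancellation: sum_j v_j b_j telescopes to 0, i.e. the shear terms
   are orthogonal to the position vector v. *)
Lemma shear_orthogonal n f p : sum_f_R0 (fun j => p (S j) * shear n f p j) n = 0.
Proof.
set (T := fun j => vprev p j * p (S j) * fconv n f j (p O)).
rewrite (sum_eq _ (fun j => T j - T (S j))).
- rewrite sum_telescope. unfold T. rewrite fconv_last. simpl. ring.
- intros j Hj. unfold T, shear, vnext.
  destruct (Nat.leb (S j) n) eqn:E.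
  + change (vprev p (S j)) with (p (S j)). ring.
  + apply Nat.leb_gt in E. replace j with n by lia. rewrite !fconv_last. ring.
Qed.

Definition Phi (n : nat) (p : nat -> R) : R := sqrt (1 + sum_f_R0 (fun j => p (S j) ^ 2) n).

Lemma Phi_ge_1 n p : 1 <= Phi n p.
Proof.
unfold Phi. rewrite <- sqrt_1 at 1. apply sqrt_le_1_alt.
pose proof (sumsq_nonneg (fun j => p (S j)) n). lra.
Qed.

Lemma Phi_coord n p i : (i <= n)%nat -> Rabs (p (S i)) <= Phi n p.
Proof.
intros Hi. unfold Phi. apply abs_le_sqrt.
- pose proof (sumsq_nonneg (fun j => p (S j)) n). lra.
- pose proof (sum_term_le (fun j => p (S j) ^ 2) n i ltac:(intros; apply pow2_ge_0) Hi).
  simpl in *. lra.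
Qed.

Lemma Phi_ext n p q : (forall i, (i <= S n)%nat -> p i = q i) -> Phi n p = Phi n q.
Proof.
intros H. unfold Phi. do 2 f_equal. apply sum_eq. intros j Hj. rewrite H by lia. reflexivity.
Qed.

(* Radial estimate: |<v, w_v>| <= Phi(v) |w|_g.  By shear_orthogonal,
   <v, w_v> = <v, a>, and Cauchy-Schwarz applies. *)
Lemma radial_bound n eta f p w :
  Rabs (sum_f_R0 (fun j => p (S j) * w (S j)) n) <= Phi n p * sqrt (gform n eta f p w).
Proof.
assert (E : sum_f_R0 (fun j => p (S j) * w (S j)) n =
   sum_f_R0 (fun j => p (S j) * frame n f p w j) n
   - w O * sum_f_R0 (fun j => p (S j) * shear n f p j) n).
{ unfold frame. generalize n at 1 3 5. intros N.
  induction N as [|N IH]; [simpl; ring|]. rewrite !tech5, IH. ring. }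
rewrite E, shear_orthogonal, Rmult_0_r, Rminus_0_r.
pose proof (cauchy_schwarz (fun j => p (S j)) (frame n f p w) n) as CS.
set (A := sum_f_R0 (fun j => p (S j) ^ 2) n) in *.
set (C := sum_f_R0 (fun j => frame n f p w j ^ 2) n) in *.
assert (HA : 0 <= A) by apply sumsq_nonneg.
assert (HC : 0 <= C) by apply sumsq_nonneg.
assert (HCg : C <= gform n eta f p w).
{ rewrite gform_frame. fold C.
  pose proof (pow2_ge_0 (eta (p O) (p 1%nat))). pose proof (pow2_ge_0 (w O)). nra. }
eapply Rle_trans; [apply (abs_le_sqrt _ (A * C)); [apply Rmult_le_pos; lra|exact CS]|].
rewrite sqrt_mult by lra. unfold Phi. fold A.
apply Rmult_le_compat; try apply sqrt_pos; apply sqrt_le_1_alt; lra.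
Qed.

Lemma gnorm_vertical n eta f p w m B j : (j <= n)%nat -> 0 < m -> m <= eta (p O) (p 1%nat) ->
  Rabs (shear n f p j) <= B -> Rabs (w (S j)) <= (1 + B / m) * sqrt (gform n eta f p w).
Proof.
intros Hj Hm He Hb.
pose proof (gnorm_frame n eta f p w j Hj) as Ha.
pose proof (gnorm_horizontal n eta f p w m Hm He) as H0.
replace (w (S j)) with (frame n f p w j - shear n f p j * w O) by (unfold frame; ring).
set (g := sqrt (gform n eta f p w)) in *.
assert (Hbw : Rabs (shear n f p j * w O) <= B / m * g).
{ rewrite Rabs_mult.
  assert (Rabs (w O) <= g / m) by (apply Rmult_le_reg_l with m; [lra|]; unfold Rdiv; field_simplify; lra).
  replace (B / m * g) with (B * (g / m)) by (field; lra).
  apply Rmult_le_compat; auto; apply Rabs_pos. }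
eapply Rle_trans; [apply Rabs_triang|]. rewrite Rabs_Ropp. lra.
Qed.

Lemma fconv_bound n f x Fb : 0 <= Fb -> (forall j, (1 <= j <= n)%nat -> Rabs (f j x) <= Fb) ->
  forall i, Rabs (fconv n f i x) <= Fb.
Proof.
intros HF H i. unfold fconv. destruct (andb (Nat.leb 1 i) (Nat.leb i n)) eqn:E.
- apply Bool.andb_true_iff in E. destruct E as [E1 E2].
  apply Nat.leb_le in E1, E2. apply H; lia.
- rewrite Rabs_R0. exact HF.
Qed.

Lemma shear_bound n f p j V Fb : (j <= n)%nat -> 0 <= V -> 0 <= Fb ->
  (forall i, (i <= n)%nat -> Rabs (p (S i)) <= V) ->
  (forall i, Rabs (fconv n f i (p O)) <= Fb) -> Rabs (shear n f p j) <= 2 * V * Fb.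
Proof.
intros Hj HV HF Hp Hf. unfold shear.
assert (H1 : Rabs (vprev p j) <= V).
{ unfold vprev. destruct j as [|j]; [rewrite Rabs_R0; lra|]. apply Hp; lia. }
assert (H2 : Rabs (vnext n p j) <= V).
{ unfold vnext. destruct (Nat.leb (S j) n) eqn:E.
  - apply Nat.leb_le in E. apply Hp; lia.
  - rewrite Rabs_R0; lra. }
eapply Rle_trans; [unfold Rminus; apply Rabs_triang|]. rewrite Rabs_Ropp, !Rabs_mult.
assert (Rabs (vprev p j) * Rabs (fconv n f j (p O)) <= V * Fb)
  by (apply Rmult_le_compat; auto; apply Rabs_pos).
assert (Rabs (vnext n p j) * Rabs (fconv n f (S j) (p O)) <= V * Fb)
  by (apply Rmult_le_compat; auto; apply Rabs_pos).
lra.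
Qed.

Lemma gform_upper n eta f p w E D B :
  Rabs (eta (p O) (p 1%nat)) <= E -> (forall i, (i <= S n)%nat -> Rabs (w i) <= D) ->
  (forall j, (j <= n)%nat -> Rabs (shear n f p j) <= B) -> 0 <= B ->
  gform n eta f p w <= (E ^ 2 + (INR n + 1) * (1 + B) ^ 2) * D ^ 2.
Proof.
intros HE HD HB HB0. rewrite gform_frame.
assert (H0 : Rabs (w O) <= D) by (apply HD; lia).
assert (HD0 : 0 <= D) by (pose proof (Rabs_pos (w O)); lra).
assert (Hx : eta (p O) (p 1%nat) ^ 2 * w O ^ 2 <= E ^ 2 * D ^ 2)
  by (apply Rmult_le_compat; try apply pow2_ge_0; apply sq_le; auto).
assert (Hv : sum_f_R0 (fun j => frame n f p w j ^ 2) n <= (INR n + 1) * ((1 + B) * D) ^ 2).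
{ rewrite <- S_INR, Rmult_comm, <- sum_cte. apply sum_Rle. intros j Hj.
  apply sq_le. unfold frame.
  eapply Rle_trans; [apply Rabs_triang|]. rewrite Rabs_mult.
  assert (Rabs (w (S j)) <= D) by (apply HD; lia).
  assert (Rabs (shear n f p j) * Rabs (w O) <= B * D)
    by (apply Rmult_le_compat; auto; apply Rabs_pos).
  lra. }
rewrite Rpow_mult_distr in Hv. nra.
Qed.

(* Continuity of real functions built from pointwise operations; these
   instances of Coquelicot's generic lemmas unify with lambda terms. *)
Lemma cont_plus (g h : R -> R) t :
  continuous g t -> continuous h t -> continuous (fun s => g s + h s) t.
Proof. intros; apply (continuous_plus g h); auto. Qed.
Lemma cont_mult (g h : R -> R) t :
  continuous g t -> continuous h t -> continuous (fun s => g s * h s) t.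
Proof. intros; apply (continuous_mult g h); auto. Qed.
Lemma cont_minus (g h : R -> R) t :
  continuous g t -> continuous h t -> continuous (fun s => g s - h s) t.
Proof. intros; apply cont_plus; auto; apply (continuous_opp h); auto. Qed.
Lemma cont_const (a t : R) : continuous (fun _ => a) t.
Proof. apply continuous_const. Qed.
Lemma cont_pow2 (g : R -> R) t : continuous g t -> continuous (fun s => g s ^ 2) t.
Proof. intros; simpl; repeat apply cont_mult; auto; apply cont_const. Qed.
Lemma cont_sqrt (g : R -> R) t : continuous g t -> continuous (fun s => sqrt (g s)) t.
Proof. intros; apply (continuous_comp g sqrt); auto; apply continuous_sqrt. Qed.
Lemma cont_abs (g : R -> R) t : continuous g t -> continuous (fun s => Rabs (g s)) t.
Proof. intros; apply (continuous_comp g Rabs); auto; apply continuous_Rabs. Qed.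
Lemma cont_2d (g : R -> R -> R) (a b : R -> R) t :
  (forall x u, continuity_2d_pt g x u) -> continuous a t -> continuous b t ->
  continuous (fun s => g (a s) (b s)) t.
Proof.
intros Hg Ha Hb. apply (continuous_comp_2 a b g); auto.
apply continuity_2d_pt_filterlim, Hg.
Qed.
Lemma cont_sum (F : nat -> R -> R) N t :
  (forall j, (j <= N)%nat -> continuous (F j) t) ->
  continuous (fun s => sum_f_R0 (fun j => F j s) N) t.
Proof.
induction N as [|N IH]; intros H; simpl; [apply H; lia|].
apply cont_plus; [apply IH; intros; apply H; lia|apply H; lia].
Qed.

Lemma is_derive_sum (F dF : nat -> R -> R) N t :
  (forall j, (j <= N)%nat -> is_derive (F j) t (dF j t)) ->
  is_derive (fun s => sum_f_R0 (fun j => F j s) N) t (sum_f_R0 (fun j => dF j t) N).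
Proof.
induction N as [|N IH]; intros H; simpl; [apply H; lia|].
apply (is_derive_plus (fun s => sum_f_R0 (fun j => F j s) N) (F (S N)));
  [apply IH; intros; apply H; lia|apply H; lia].
Qed.

Lemma smooth1_continuous (g : R -> R) x : smooth1 g -> continuous g x.
Proof. intros Hg. apply (@ex_derive_continuous R_AbsRing R_NormedModule), (Hg 1%nat x). Qed.

Lemma fconv_continuous n (f : nat -> R -> R) (a : R -> R) j t :
  (forall j, (1 <= j <= n)%nat -> smooth1 (f j)) -> continuous a t ->
  continuous (fun s => fconv n f j (a s)) t.
Proof.
intros Hf Ha. apply (continuous_comp a (fconv n f j)); auto. unfold fconv.
destruct (andb (Nat.leb 1 j) (Nat.leb j n)) eqn:E; [|apply cont_const].
apply Bool.andb_true_iff in E. destruct E as [E1 E2]. apply Nat.leb_le in E1, E2.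
apply smooth1_continuous, Hf; lia.
Qed.

Lemma gform_continuous n eta f (p w : R -> nat -> R) t :
  (forall j, (1 <= j <= n)%nat -> smooth1 (f j)) ->
  (forall x u, continuity_2d_pt eta x u) ->
  (forall i, (i <= S n)%nat -> continuous (fun s => p s i) t) ->
  (forall i, (i <= S n)%nat -> continuous (fun s => w s i) t) ->
  continuous (fun s => gform n eta f (p s) (w s)) t.
Proof.
intros Hf He Hp Hw. unfold gform. apply cont_plus.
- apply cont_mult; apply cont_pow2; [apply cont_2d; auto; apply Hp; lia|apply Hw; lia].
- apply (cont_sum (fun j s => (w s (S j) + (vprev (p s) j * fconv n f j (p s O) -
      vnext n (p s) j * fconv n f (S j) (p s O)) * w s O) ^ 2)).
  intros j Hj. apply cont_pow2, cont_plus; [apply Hw; lia|].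
  apply cont_mult; [|apply Hw; lia].
  apply cont_minus; apply cont_mult; try (apply fconv_continuous; auto; apply Hp; lia).
  + unfold vprev. destruct j; [apply cont_const|apply Hp; lia].
  + unfold vnext. destruct (Nat.leb (S j) n) eqn:E; [|apply cont_const].
    apply Nat.leb_le in E. apply Hp; lia.
Qed.

Lemma ex_RInt_cont (g : R -> R) a b : (forall z, continuous g z) -> ex_RInt g a b.
Proof. intros H. apply (@ex_RInt_continuous R_CompleteNormedModule). intros; apply H. Qed.

Lemma displacement_bound (phi dphi G : R -> R) K t :
  0 <= t <= 1 -> 0 <= K ->
  (forall s, is_derive phi s (dphi s)) -> (forall s, continuous dphi s) ->
  (forall s, continuous G s) -> (forall s, 0 <= G s) ->
  (forall s, 0 < s < t -> Rabs (dphi s) <= K * G s) ->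
  Rabs (phi t - phi 0) <= K * RInt G 0 1.
Proof.
intros Ht HK Hd Hc HG HG0 Hb.
assert (E : RInt dphi 0 t = phi t - phi 0)
  by (apply is_RInt_unique, (is_RInt_derive phi dphi); intros; auto).
rewrite <- E.
assert (IG : forall a b, ex_RInt G a b) by (intros; apply ex_RInt_cont; auto).
eapply Rle_trans; [apply abs_RInt_le; [lra|apply ex_RInt_cont; auto]|].
eapply Rle_trans.
{ apply RInt_le with (g := fun s => K * G s); [lra| | |exact Hb].
  - apply ex_RInt_cont; intros; apply cont_abs; auto.
  - apply ex_RInt_cont; intros; apply cont_mult; auto; apply cont_const. }
replace (RInt (fun s => K * G s) 0 t) with (K * RInt G 0 t) by (symmetry; apply (RInt_scal G 0 t K), IG).
apply Rmult_le_compat_l; auto.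
rewrite <- (RInt_Chasles G 0 t 1) by auto.
assert (0 <= RInt G t 1) by (apply RInt_ge_0; auto; lra).
unfold plus; simpl. lra.
Qed.

Definition speed (n : nat) (eta : R -> R -> R) (f : nat -> R -> R)
    (c : R -> nat -> R) (t : R) : R :=
  sqrt (gform n eta f (c t) (velocity c t)).

Section AlongCurve.
Variables (n : nat) (f : nat -> R -> R) (eta : R -> R -> R) (c : R -> nat -> R).
Hypothesis Hf : forall j, (1 <= j <= n)%nat -> smooth1 (f j).
Hypothesis He : forall x u, continuity_2d_pt eta x u.
Hypothesis Hc : C1_curve n c.

Lemma curve_coord_derive i : (i <= S n)%nat ->
  forall s, is_derive (fun s => c s i) s (velocity c s i).
Proof. intros Hi s. apply Derive_correct, (proj1 (Hc i Hi)). Qed.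

Lemma curve_coord_continuous i : (i <= S n)%nat -> forall s, continuous (fun s => c s i) s.
Proof. intros Hi s. apply (@ex_derive_continuous R_AbsRing R_NormedModule), (proj1 (Hc i Hi)). Qed.

Lemma speed_continuous t : continuous (speed n eta f c) t.
Proof.
apply cont_sqrt, gform_continuous; auto.
- intros i Hi. apply curve_coord_continuous, Hi.
- intros i Hi. apply (proj2 (Hc i Hi)).
Qed.

Lemma glength_nonneg : 0 <= glength n eta f c.
Proof.
apply RInt_ge_0; [lra| |intros; apply sqrt_pos].
apply ex_RInt_cont, speed_continuous.
Qed.

Lemma Phi_curve_derive s :
  is_derive (fun s => Phi n (c s)) s
    (sum_f_R0 (fun j => c s (S j) * velocity c s (S j)) n / Phi n (c s)).
Proof.
pose proof (Phi_ge_1 n (c s)) as HP.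
replace (sum_f_R0 (fun j => c s (S j) * velocity c s (S j)) n / Phi n (c s))
  with ((0 + sum_f_R0 (fun j => 2 * (c s (S j) * velocity c s (S j))) n) / (2 * Phi n (c s)))
  by (rewrite (sum_eq _ (fun j => c s (S j) * velocity c s (S j) * 2)) by (intros; ring);
      rewrite <- scal_sum; field; lra).
apply (is_derive_sqrt (fun s => 1 + sum_f_R0 (fun j => c s (S j) ^ 2) n)).
- apply (is_derive_plus (fun _ => 1)); [auto_derive; auto|].
  apply (is_derive_sum (fun j s => c s (S j) ^ 2)
           (fun j s => 2 * (c s (S j) * velocity c s (S j)))).
  intros j Hj.
  pose proof (is_derive_pow (fun s => c s (S j)) 2 s _ (curve_coord_derive (S j) ltac:(lia) s)) as Hp.
  replace (2 * (c s (S j) * velocity c s (S j)))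
    with (INR 2 * velocity c s (S j) * c s (S j) ^ Init.Nat.pred 2) by (simpl; ring).
  exact Hp.
- pose proof (sumsq_nonneg (fun j => c s (S j)) n). lra.
Qed.

Lemma Phi_curve_derive_continuous s :
  continuous (fun s => sum_f_R0 (fun j => c s (S j) * velocity c s (S j)) n / Phi n (c s)) s.
Proof.
apply cont_mult.
- apply (cont_sum (fun j s => c s (S j) * velocity c s (S j))). intros j Hj.
  apply cont_mult; [apply curve_coord_continuous; lia|apply (proj2 (Hc (S j) ltac:(lia)))].
- apply continuity_pt_filterlim, (continuity_pt_inv (fun s => Phi n (c s))).
  + apply continuity_pt_filterlim, cont_sqrt, cont_plus; [apply cont_const|].
    apply (cont_sum (fun j s => c s (S j) ^ 2)). intros j Hj.
    apply cont_pow2, curve_coord_continuous; lia.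
  + pose proof (Phi_ge_1 n (c s)). lra.
Qed.

Lemma curve_radial t : 0 <= t <= 1 ->
  Rabs (Phi n (c t) - Phi n (c 0)) <= glength n eta f c.
Proof.
intros Ht. rewrite <- (Rmult_1_l (glength n eta f c)).
apply (displacement_bound _ _ (speed n eta f c) 1 t Ht ltac:(lra) Phi_curve_derive
         Phi_curve_derive_continuous speed_continuous); [intros; apply sqrt_pos|].
intros s _. pose proof (radial_bound n eta f (c s) (velocity c s)) as Hrad.
pose proof (Phi_ge_1 n (c s)) as HP.
unfold Rdiv. rewrite Rabs_mult, Rabs_inv, (Rabs_pos_eq (Phi n (c s))) by lra.
apply Rmult_le_reg_r with (Phi n (c s)); [lra|].
rewrite Rmult_assoc, Rinv_l by lra. unfold speed. lra.
Qed.

Variable m : R.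
Hypothesis Hm : 0 < m.
Hypothesis Hlb : forall x u, m <= eta x u.

Lemma horizontal_speed s : Rabs (velocity c s O) <= / m * speed n eta f c s.
Proof.
apply Rmult_le_reg_l with m; [exact Hm|].
rewrite <- Rmult_assoc, Rinv_r, Rmult_1_l by lra.
apply gnorm_horizontal; auto.
Qed.

Lemma curve_horizontal t : 0 <= t <= 1 -> Rabs (c t O - c 0 O) <= / m * glength n eta f c.
Proof.
intros Ht.
apply (displacement_bound (fun s => c s O) (fun s => velocity c s O) (speed n eta f c) _ t Ht).
- apply Rlt_le, Rinv_0_lt_compat, Hm.
- apply curve_coord_derive; lia.
- apply (proj2 (Hc O ltac:(lia))).
- apply speed_continuous.
- intros; apply sqrt_pos.
- intros s _. apply horizontal_speed.
Qed.

Lemma curve_coordinate_displacement X V Fb : 0 <= V -> 0 <= Fb ->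
  (forall j x, (1 <= j <= n)%nat -> Rabs x <= X -> Rabs (f j x) <= Fb) ->
  (forall s, 0 < s < 1 -> Rabs (c s O) <= X /\ Phi n (c s) <= V) ->
  forall i, (i <= S n)%nat ->
  Rabs (c 1 i - c 0 i) <= (/ m + 1 + 2 * V * Fb / m) * glength n eta f c.
Proof.
intros HV HF Hfb Hreg i Hi.
assert (Hm' : 0 < / m) by (apply Rinv_0_lt_compat; auto).
assert (HB : 0 <= 2 * V * Fb / m) by (unfold Rdiv; repeat apply Rmult_le_pos; lra).
apply (displacement_bound (fun s => c s i) (fun s => velocity c s i) (speed n eta f c));
  try lra.
- apply curve_coord_derive, Hi.
- apply (proj2 (Hc i Hi)).
- apply speed_continuous.
- intros; apply sqrt_pos.
- intros s Hs. destruct (Hreg s Hs) as [HX HP].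
  pose proof (sqrt_pos (gform n eta f (c s) (velocity c s))) as HG.
  destruct i as [|j].
  + pose proof (horizontal_speed s). unfold speed in *. nra.
  + assert (Hb : Rabs (shear n f (c s) j) <= 2 * V * Fb).
    { apply shear_bound; [lia|auto|auto| |].
      - intros i' Hi'. eapply Rle_trans; [apply Phi_coord, Hi'|exact HP].
      - apply fconv_bound; auto. }
    pose proof (gnorm_vertical n eta f (c s) (velocity c s) m (2 * V * Fb) j
                  ltac:(lia) Hm (Hlb _ _) Hb).
    unfold speed. nra.
Qed.

End AlongCurve.

Lemma bounded_on_interval (g : R -> R) X :
  (forall x, continuous g x) -> exists M, 0 <= M /\ forall x, Rabs x <= X -> Rabs (g x) <= M.
Proof.
intros Hg.
destruct (continuity_ab_maj (fun x => Rabs (g x)) (- Rabs X) (Rabs X)) as [xm [Hmax _]].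
- pose proof (Rabs_pos X). lra.
- intros x _. apply continuity_pt_filterlim, cont_abs, Hg.
- exists (Rabs (g xm)). split; [apply Rabs_pos|].
  intros x Hx. apply Hmax. pose proof (Rle_abs X). apply Rabs_le_between. lra.
Qed.

Lemma f_bounded n (f : nat -> R -> R) :
  (forall j, (1 <= j <= n)%nat -> smooth1 (f j)) ->
  forall X, exists Fb, 0 <= Fb /\
    forall j x, (1 <= j <= n)%nat -> Rabs x <= X -> Rabs (f j x) <= Fb.
Proof.
intros Hf X. induction n as [|n IH].
- exists 0. split; [lra|]. intros; lia.
- destruct IH as [F1 [HF1 Hb1]]; [intros j Hj; apply Hf; lia|].
  destruct (bounded_on_interval (f (S n)) X) as [F2 [HF2 Hb2]].
  { intros x. apply smooth1_continuous, Hf. lia. }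
  exists (F1 + F2). split; [lra|]. intros j x Hj Hx.
  destruct (Nat.eq_dec j (S n)) as [->|Hne].
  + pose proof (Hb2 x Hx). lra.
  + pose proof (Hb1 j x ltac:(lia) Hx). lra.
Qed.

Definition segment (a b : nat -> R) : R -> nat -> R := fun t i => a i + t * (b i - a i).

Lemma segment_velocity a b t i : velocity (segment a b) t i = b i - a i.
Proof. unfold velocity, segment. apply is_derive_unique. auto_derive; auto. ring. Qed.

Lemma segment_C1 n a b : C1_curve n (segment a b).
Proof.
intros i _. split.
- intros t. unfold segment. auto_derive; auto.
- intros t. apply (continuous_ext (fun _ => b i - a i)); [|apply cont_const].
  intros x. symmetry. apply segment_velocity.
Qed.

Lemma segment_joins n a b : joins n (segment a b) a b.
Proof. intros i _. unfold segment. split; ring. Qed.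

Lemma segment_speed_near n (f : nat -> R -> R) (eta : R -> R -> R) :
  (forall j, (1 <= j <= n)%nat -> smooth1 (f j)) ->
  (forall x u, continuity_2d_pt eta x u) ->
  forall q, exists C rho, 0 <= C /\ 0 < rho /\ forall p r, r <= rho ->
    (forall i, (i <= S n)%nat -> Rabs (p i - q i) <= r) ->
    forall t, 0 < t < 1 -> speed n eta f (segment p q) t <= C * r.
Proof.
intros Hf He q.
destruct (He (q O) (q 1%nat) (mkposreal 1 Rlt_0_1)) as [de Hde].
destruct (f_bounded n f Hf (Rabs (q O) + 1)) as [Fb [HFb HFb']].
set (Qv := sum_f_R0 (fun i => Rabs (q i)) (S n)).
assert (HQv : forall i, (i <= S n)%nat -> Rabs (q i) <= Qv)
  by (intros i Hi; apply (sum_term_le (fun i => Rabs (q i))); auto; intros; apply Rabs_pos).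
assert (HQv0 : 0 <= Qv) by (pose proof (HQv O ltac:(lia)); pose proof (Rabs_pos (q O)); lra).
set (B := 2 * (Qv + 1) * Fb).
assert (HB : 0 <= B) by (unfold B; repeat apply Rmult_le_pos; lra).
set (E := Rabs (eta (q O) (q 1%nat)) + 1).
pose proof (cond_pos de) as Hde0.
assert (HC : 0 <= E ^ 2 + (INR n + 1) * (1 + B) ^ 2)
  by (pose proof (pos_INR n); pose proof (pow2_ge_0 E); pose proof (pow2_ge_0 (1 + B)); nra).
exists (sqrt (E ^ 2 + (INR n + 1) * (1 + B) ^ 2)), (Rmin 1 (de / 2)).
split; [apply sqrt_pos|split; [apply Rmin_glb_lt; lra|]].
intros p r Hr Hp t Ht.
assert (Hr1 : r <= 1) by (eapply Rle_trans; [exact Hr|apply Rmin_l]).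
assert (Hr2 : r <= de / 2) by (eapply Rle_trans; [exact Hr|apply Rmin_r]).
assert (Hr0 : 0 <= r) by (pose proof (Hp O ltac:(lia)); pose proof (Rabs_pos (p O - q O)); lra).
set (c := segment p q).
assert (Hct : forall i, (i <= S n)%nat -> Rabs (c t i - q i) <= r).
{ intros i Hi. unfold c, segment.
  replace (p i + t * (q i - p i) - q i) with ((1 - t) * (p i - q i)) by ring.
  rewrite Rabs_mult, Rabs_pos_eq by lra.
  pose proof (Hp i Hi). pose proof (Rabs_pos (p i - q i)). nra. }
unfold speed. rewrite <- (sqrt_pow2 r), <- sqrt_mult by (try apply pow2_ge_0; lra).
apply sqrt_le_1_alt, gform_upper; auto.
- pose proof (Hct O ltac:(lia)). pose proof (Hct 1%nat ltac:(lia)).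
  specialize (Hde (c t O) (c t 1%nat) ltac:(lra) ltac:(lra)). simpl in Hde.
  pose proof (Rabs_triang_inv (eta (c t O) (c t 1%nat)) (eta (q O) (q 1%nat))).
  unfold E. lra.
- intros i Hi. unfold c. rewrite segment_velocity, Rabs_minus_sym. apply Hp, Hi.
- intros j Hj. apply shear_bound; [lia|lra|lra| |].
  + intros i Hi. pose proof (Hct (S i) ltac:(lia)). pose proof (HQv (S i) ltac:(lia)).
    pose proof (Rabs_triang_inv (c t (S i)) (q (S i))). lra.
  + apply fconv_bound; auto. intros j' Hj'. apply HFb'; auto.
    pose proof (Hct O ltac:(lia)). pose proof (Rabs_triang_inv (c t O) (q O)). lra.
Qed.

Lemma dist_lt_near n (f : nat -> R -> R) (eta : R -> R -> R) :
  (forall j, (1 <= j <= n)%nat -> smooth1 (f j)) ->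
  (forall x u, continuity_2d_pt eta x u) ->
  forall q eps, 0 < eps -> exists r, 0 < r /\ forall p,
    (forall i, (i <= S n)%nat -> Rabs (p i - q i) <= r) -> dist_lt n eta f p q eps.
Proof.
intros Hf He q eps Heps.
destruct (segment_speed_near n f eta Hf He q) as [C [rho [HC [Hrho Hspeed]]]].
set (r := Rmin rho (eps / (C + 1))).
assert (Hr : 0 < r) by (apply Rmin_glb_lt; [lra|apply Rdiv_lt_0_compat; lra]).
assert (Hr1 : r <= rho) by apply Rmin_l.
assert (Hr2 : r <= eps / (C + 1)) by apply Rmin_r.
exists r. split; [exact Hr|]. intros p Hp.
exists (segment p q). split; [apply segment_C1|split; [apply segment_joins|]].
eapply Rle_lt_trans.
{ apply RInt_le with (g := fun _ => C * r); [lra| | |exact (Hspeed p r Hr1 Hp)].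
  - apply ex_RInt_cont. intros. apply (speed_continuous n f eta _ Hf He (segment_C1 n p q)).
  - apply ex_RInt_cont. intros. apply cont_const. }
rewrite RInt_const. unfold scal; simpl; unfold mult; simpl.
rewrite Rminus_0_r, Rmult_1_l.
assert (C * r <= C * (eps / (C + 1))) by (apply Rmult_le_compat_l; lra).
assert (C * (eps / (C + 1)) < eps).
{ apply Rmult_lt_reg_r with (C + 1); [lra|].
  replace (C * (eps / (C + 1)) * (C + 1)) with (C * eps) by (field; lra). nra. }
lra.
Qed.

Section LowerBound.
Variables (n : nat) (f : nat -> R -> R) (eta : R -> R -> R) (m : R).
Hypothesis Hf : forall j, (1 <= j <= n)%nat -> smooth1 (f j).
Hypothesis He : forall x u, continuity_2d_pt eta x u.
Hypothesis Hm : 0 < m.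
Hypothesis Hlb : forall x u, m <= eta x u.

Lemma short_curve_confined c : C1_curve n c -> glength n eta f c < 1 ->
  forall t, 0 <= t <= 1 ->
  Rabs (c t O) <= Rabs (c 0 O) + / m /\ Phi n (c t) <= Phi n (c 0) + 1.
Proof.
intros Hc HL t Ht.
pose proof (curve_horizontal n f eta c Hf He Hc m Hm Hlb t Ht) as Hx.
pose proof (curve_radial n f eta c Hf He Hc t Ht) as HP.
assert (/ m * glength n eta f c <= / m * 1)
  by (apply Rmult_le_compat_l; [apply Rlt_le, Rinv_0_lt_compat|]; lra).
pose proof (Rabs_triang_inv (c t O) (c 0 O)).
pose proof (Rle_abs (Phi n (c t) - Phi n (c 0))).
split; lra.
Qed.

Lemma tail_coordinate_control (s : nat -> nat -> R) N1 :
  (forall k, (N1 <= k)%nat -> dist_lt n eta f (s N1) (s k) 1) ->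
  exists K, 0 < K /\ forall a b c, (N1 <= a)%nat ->
    C1_curve n c -> joins n c (s a) (s b) -> glength n eta f c < 1 ->
    forall i, (i <= S n)%nat -> Rabs (s b i - s a i) <= K * glength n eta f c.
Proof.
intros Hnear.
assert (Hm' : 0 < / m) by (apply Rinv_0_lt_compat, Hm).
assert (Htail : forall k, (N1 <= k)%nat ->
          Rabs (s k O) <= Rabs (s N1 O) + / m /\ Phi n (s k) <= Phi n (s N1) + 1).
{ intros k Hk. destruct (Hnear k Hk) as [c [Hc [Hj HL]]].
  destruct (short_curve_confined c Hc HL 1 ltac:(lra)) as [Hx HP].
  rewrite (proj1 (Hj O ltac:(lia))), (proj2 (Hj O ltac:(lia))) in Hx.
  rewrite (Phi_ext n (c 1) (s k)), (Phi_ext n (c 0) (s N1)) in HP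
    by (intros; apply Hj; auto).
  auto. }
set (X := Rabs (s N1 O) + 2 * / m).
set (V := Phi n (s N1) + 2).
assert (HV : 0 <= V) by (unfold V; pose proof (Phi_ge_1 n (s N1)); lra).
destruct (f_bounded n f Hf X) as [Fb [HFb HFb']].
exists (/ m + 1 + 2 * V * Fb / m). split.
{ assert (0 <= 2 * V * Fb / m) by (unfold Rdiv; repeat apply Rmult_le_pos; lra). lra. }
intros a b c Ha Hc Hj HL i Hi.
rewrite <- (proj1 (Hj i Hi)), <- (proj2 (Hj i Hi)).
apply (curve_coordinate_displacement n f eta c Hf He Hc m Hm Hlb X V Fb); auto.
intros t Ht. destruct (short_curve_confined c Hc HL t ltac:(lra)) as [Hx HP].
destruct (Htail a Ha) as [Hxa HPa].
rewrite (proj1 (Hj O ltac:(lia))) in Hx.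
rewrite (Phi_ext n (c 0) (s a)) in HP by (intros; apply Hj; auto).
unfold X, V. split; lra.
Qed.

Lemma cauchy_coordinates_converge (s : nat -> nat -> R) :
  (forall eps, 0 < eps -> exists N, forall a b, (N <= a)%nat -> (N <= b)%nat ->
      dist_lt n eta f (s a) (s b) eps) ->
  forall i, (i <= S n)%nat -> exists l : R, is_lim_seq (fun k => s k i) l.
Proof.
intros Hcau i Hi.
destruct (Hcau 1 Rlt_0_1) as [N1 HN1].
destruct (tail_coordinate_control s N1 (fun k Hk => HN1 N1 k (Nat.le_refl _) Hk))
  as [K [HK Hlip]].
assert (Hcauchy : ex_lim_seq_cauchy (fun k => s k i)).
{ intros eps. pose proof (cond_pos eps) as Heps.
  set (d := Rmin 1 (eps / (K + 1))).
  assert (Hd : 0 < d) by (apply Rmin_glb_lt; [lra|apply Rdiv_lt_0_compat; lra]).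
  assert (Hd1 : d <= 1) by apply Rmin_l.
  assert (Hd2 : d <= eps / (K + 1)) by apply Rmin_r.
  destruct (Hcau d Hd) as [N2 HN2].
  exists (Nat.max N1 N2). intros a b Ha Hb.
  destruct (HN2 a b ltac:(lia) ltac:(lia)) as [c [Hc [Hj HL]]].
  pose proof (glength_nonneg n f eta c Hf He Hc).
  pose proof (Hlip a b c ltac:(lia) Hc Hj ltac:(lra) i Hi) as Hab.
  rewrite Rabs_minus_sym.
  assert (K * glength n eta f c <= K * (eps / (K + 1))) by (apply Rmult_le_compat_l; lra).
  assert (K * (eps / (K + 1)) < eps).
  { apply Rmult_lt_reg_r with (K + 1); [lra|].
    replace (K * (eps / (K + 1)) * (K + 1)) with (K * eps) by (field; lra). nra. }
  lra. }
destruct (proj2 (ex_lim_seq_cauchy_corr _) Hcauchy) as [l Hl].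
exists l. exact Hl.
Qed.

End LowerBound.

Lemma eventually_all_close (u : nat -> nat -> R) (q : nat -> R) N :
  (forall i, (i <= N)%nat -> is_lim_seq (fun k => u k i) (q i)) ->
  forall r, 0 < r -> exists K, forall k i, (K <= k)%nat -> (i <= N)%nat ->
    Rabs (u k i - q i) <= r.
Proof.
intros Hlim r Hr. induction N as [|N IH].
- destruct (proj2 (is_lim_seq_spec _ _) (Hlim O (Nat.le_refl _)) (mkposreal r Hr)) as [K HK].
  exists K. intros k i Hk Hi. replace i with O by lia. apply Rlt_le, HK, Hk.
- destruct IH as [K1 HK1]; [intros; apply Hlim; lia|].
  destruct (proj2 (is_lim_seq_spec _ _) (Hlim (S N) (Nat.le_refl _)) (mkposreal r Hr)) as [K2 HK2].
  exists (Nat.max K1 K2). intros k i Hk Hi.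
  destruct (Nat.eq_dec i (S N)) as [->|Hne].
  + apply Rlt_le, HK2. lia.
  + apply HK1; lia.
Qed.

Theorem proposition3p4 (n : nat) (f : nat -> R -> R) (eta : R -> R -> R) :
  (forall j, (1 <= j <= n)%nat -> smooth1 (f j)) ->
  smooth2 eta ->
  (forall x u, 0 < eta x u) ->
  (forall x, eta x 0 = 1) ->
  (forall x u, Scal eta x u < 0) ->
  (exists eps, 0 < eps /\ forall x u,
      Rabs (kgamma eta x) <= (1 - eps) * sqrt (/ 2 * Rabs (Scal eta x u))) ->
  metric_complete n eta f.
Proof.
intros Hf Hs Hpos H0 HS Hk s Hcau.
destruct (eta_lower_bound eta Hs Hpos H0 HS Hk) as [m [Hm Hlb]].
assert (He : forall x u, continuity_2d_pt eta x u) by exact (proj1 (Hs 0%nat)).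
set (q := fun i => real (Lim_seq (fun k => s k i))).
assert (Hq : forall i, (i <= S n)%nat -> is_lim_seq (fun k => s k i) (q i)).
{ intros i Hi. destruct (cauchy_coordinates_converge n f eta m Hf He Hm Hlb s Hcau i Hi) as [l Hl].
  unfold q. rewrite (is_lim_seq_unique _ _ Hl). exact Hl. }
exists q. intros eps Heps.
destruct (dist_lt_near n f eta Hf He q eps Heps) as [r [Hr Hnear]].
destruct (eventually_all_close s q (S n) Hq r Hr) as [N HN].
exists N. intros k HkN. apply Hnear. intros i Hi. apply HN; auto.
Qed.
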